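(* Let $n\ge3$, let $S_n$ act on $V=\mathbb{C}^n$ by permutations, fix $a,b,c\in\mathbb{C}$, and let $*\in\{L,C\}$. For $g\in S_n$ let $\phi^*_g$ be the $g$-component of $\phi(\kappa^*_{\mathrm{tri}},\kappa^L_{\mathrm{tri}})$. If $g$ is not a $5$-cycle, then $\phi^*_g\equiv0$.
   Context: $S_n$ acts by $\sigma e_i=e_{\sigma(i)}$; $V^g$ is the fixed space of $g$. $\kappa^L_{\mathrm{tri}}$ is the linear 2-cochain supported on 3-cycles with $\kappa^L_{(ijk)}(e_i,e_j)=\kappa^L_{(ijk)}(e_j,e_k)=\kappa^L_{(ijk)}(e_k,e_i)=a(e_i+e_j+e_k)+b\sum_{l\notin\{i,j,k\}}e_l$ and $\kappa^L_{(ijk)}(e_l,e_m)=0$ whenever $e_l$ or $e_m$ lies in $V^{(ijk)}$; $\kappa^C_{\mathrm{tri}}$ is the constant 2-cochain supported on 3-cycles with $\kappa^C_{(ijk)}(e_i,e_j)=\kappa^C_{(ijk)}(e_j,e_k)=\kappa^C_{(ijk)}(e_k,e_i)=c$ and $\kappa^C_{(ijk)}(e_l,e_m)=0$ whenever $e_l$ or $e_m$ lies in $V^{(ijk)}$. For $\alpha$ linear or constant and $\beta$ linear 2-cochains ($\alpha=\sum_g\alpha_gg$ etc.), $\phi(\alpha,\beta)=\sum_g\phi_gg$ with $\phi_g=\sum_{xy=g}\phi_{x,y}$, $\phi_{x,y}(v_1,v_2,v_3)=\alpha_x(v_1+yv_1,\beta_y(v_2,v_3))+\alpha_x(v_2+yv_2,\beta_y(v_3,v_1))+\alpha_x(v_3+yv_3,\beta_y(v_1,v_2))$.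 *)

(* V = C^n with C = R[i] (complex numbers over a real field R;
   R = the real numbers gives C = the complex numbers). *)
From mathcomp Require Import all_boot all_algebra all_fingroup.
From mathcomp Require Import reals.
From mathcomp.real_closed Require Import complex.

Set Implicit Arguments.
Unset Strict Implicit.
Unset Printing Implicit Defensive.

Import GRing.Theory.
Local Open Scope ring_scope.

Section Defs.
Variables (R : realType) (n : nat).
Local Notation C := R[i].
Local Notation V := 'rV[C]_n.

Definition vcoord (v : V) (j : 'I_n) : C := v ord0 j.

(* permutation action  sigma e_i = e_(sigma i), i.e. (sigma v)_j = v_(sigma^-1 j) *)
Definition pact (s : 'S_n) (v : V) : V := \row_j v ord0 ((s^-1)%g j).

(* the support (moved points) of g; its complement indexes the e_l in V^g *)
Definition moved (g : 'S_n) : {set 'I_n} := [set x | g x != x].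

Definition is_kcycle (k : nat) (g : 'S_n) : bool :=
  [exists i : 'I_n, [forall j : 'I_n, (g j != j) ==> (j \in porbit g i)]
                    && (#|porbit g i| == k)].

(* "x y = g" in S_n, where x y is the composite  v |-> x (y v)  (y first) *)
Definition comp_eq (x y g : 'S_n) : bool := [forall i, x (y i) == g i].

(* For a 3-cycle g = (i j k) (i |-> j |-> k |-> i) and p, q moved by g:
   +1 on (e_i,e_j),(e_j,e_k),(e_k,e_i), -1 on the reversed pairs (the cochain
   is alternating), 0 on (e_p,e_p). *)
Definition tri_sign (g : 'S_n) (p q : 'I_n) : C :=
  if g p == q then 1 else if g q == p then -1 else 0.

Definition tri_pair (g : 'S_n) (p q : 'I_n) : bool :=
  [&& is_kcycle 3 g, p \in moved g & q \in moved g].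

Definition tri_vec (a b : C) (g : 'S_n) : V :=
  \row_l (if l \in moved g then a else b).

Definition kappaL_basis (a b : C) (g : 'S_n) (p q : 'I_n) : V :=
  if tri_pair g p q then tri_sign g p q *: tri_vec a b g else 0.

Definition kappaC_basis (c : C) (g : 'S_n) (p q : 'I_n) : C :=
  if tri_pair g p q then tri_sign g p q * c else 0.

Definition kappaL (a b : C) (g : 'S_n) (v w : V) : V :=
  \sum_(p < n) \sum_(q < n) (vcoord v p * vcoord w q) *: kappaL_basis a b g p q.

Definition kappaC (c : C) (g : 'S_n) (v w : V) : C :=
  \sum_(p < n) \sum_(q < n) (vcoord v p * vcoord w q) * kappaC_basis c g p q.

Definition phi_xy (W : zmodType) (al : 'S_n -> V -> V -> W)
    (be : 'S_n -> V -> V -> V) (x y : 'S_n) (v1 v2 v3 : V) : W :=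
  al x (v1 + pact y v1) (be y v2 v3)
  + al x (v2 + pact y v2) (be y v3 v1)
  + al x (v3 + pact y v3) (be y v1 v2).

Definition phi_g (W : zmodType) (al : 'S_n -> V -> V -> W)
    (be : 'S_n -> V -> V -> V) (g : 'S_n) (v1 v2 v3 : V) : W :=
  \sum_(x : 'S_n) \sum_(y : 'S_n | comp_eq x y g) phi_xy al be x y v1 v2 v3.

End Defs.

(* For a 3-cycle g let B_g be its alternating form (B_g = 0 for other g), so
   that kappa^L_g(v,w) = B_g(v,w) t_g and kappa^C_g(v,w) = c B_g(v,w), with
   t_g = a (e_i + e_j + e_k) + b sum_{l notin {i,j,k}} e_l.  Then phi_{x,y} is
   the scalar S(x,y) = sum_cyc B_y(v2,v3) B_x(v1 + y v1, t_y) times t_x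
   (resp. c), and S(x,y) = 0 unless x and y are 3-cycles.  If y moves none or
   all of the three points of x, then t_y is constant on supp x and
   B_x(_, t_y) = 0.  If y moves exactly one of them, xy is a 5-cycle.  If y
   moves exactly two, then u |-> B_x(u + y u, t_y) is a linear form f in the
   coordinates on supp y with f(1,1,1) = 0, while B_y(v,w) = det(1,v,w) on
   supp y; by Cramer's rule
   sum_cyc f(v1) det(1,v2,v3) = f(1,1,1) det(v1,v2,v3) = 0. *)

From mathcomp Require Import all_boot all_algebra all_fingroup.
From mathcomp Require Import reals.
From mathcomp.real_closed Require Import complex.
From mathcomp Require Import ring.

Set Implicit Arguments.
Unset Strict Implicit.
Unset Printing Implicit Defensive.

Import GRing.Theory.
Local Open Scope ring_scope.

Lemma sum_over_support (T : finType) (M : nmodType) (F : T -> M) (s : seq T) :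
  uniq s -> (forall i, i \notin s -> F i = 0) -> \sum_i F i = \sum_(i <- s) F i.
Proof.
move=> uniq_s F0; rewrite (bigID (mem s)) /= [X in _ + X]big1 ?addr0 //.
by rewrite big_uniq.
Qed.

Lemma uniq3P (T : eqType) (p q r : T) :
  reflect [/\ p != q, p != r & q != r] (uniq [:: p; q; r]).
Proof.
rewrite /= !inE !negb_or andbT.
by apply: (iffP idP) => [/andP [/andP []] | []] -> ->.
Qed.

Lemma odd_one_out (T : eqType) (f : T -> T) (P : pred T) k : f (f (f k)) = k ->
  (P (f k) = P k /\ P (f (f k)) = P k) \/
  exists2 j, j \in [:: k; f k; f (f k)]
           & P (f j) = ~~ P j /\ P (f (f j)) = ~~ P j.
Proof.
move=> f3k; case Pk: (P k); case P1: (P (f k)); case P2: (P (f (f k)));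
  first [by left | right];
  first [ by exists k; rewrite ?inE ?eqxx ?Pk ?P1 ?P2
        | by exists (f k); rewrite ?inE ?eqxx ?orbT ?f3k ?Pk ?P1 ?P2
        | by exists (f (f k)); rewrite ?inE ?eqxx ?orbT ?f3k ?Pk ?P1 ?P2 ].
Qed.

Lemma moved_neq_fixed (T : finType) (s : {perm T}) i j :
  s i != i -> s j = j -> i != j.
Proof. by move=> si sj; apply: contraNneq si => ->; rewrite sj. Qed.

Lemma porbit_traject_iter (T : finType) (s : {perm T}) x k :
  (0 < k)%N -> iter k s x = x -> porbit s x =i traject s x k.
Proof.
move=> k_gt0 sk_x y; apply/idP/idP => [/porbitP [i ->] | /trajectP [i _ ->]].
- rewrite permX; apply/loopingP; rewrite /looping sk_x.
  by case: k k_gt0 {sk_x} => //= k _; rewrite inE eqxx.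
- by rewrite -permX mem_porbit.
Qed.

Section Cycles.
Variable n : nat.
Implicit Types (g x y : 'S_n) (k m : 'I_n).

Lemma is_kcycle_traject (l : nat) g m : (0 < l)%N -> iter l g m = m ->
    uniq (traject g m l) -> (forall j, g j != j -> j \in traject g m l) ->
  is_kcycle l g.
Proof.
move=> l_gt0 gl_m uniq_orb moved_orb; have orbE := porbit_traject_iter l_gt0 gl_m.
apply/existsP; exists m; apply/andP; split.
- by apply/forallP => j; apply/implyP => /moved_orb; rewrite orbE.
- by rewrite (eq_card orbE) (card_uniqP uniq_orb) size_traject.
Qed.

Lemma kcycle3P x k : is_kcycle 3 x -> x k != k ->
  [/\ x (x (x k)) = k, uniq [:: k; x k; x (x k)]
    & forall j, x j != j -> j \in [:: k; x k; x (x k)]].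
Proof.
case/existsP => i /andP [/forallP moved_orb /eqP card3] xk.
have orb_k : porbit x k = porbit x i.
  by apply/eqP; rewrite eq_porbit_mem; apply: (implyP (moved_orb k)).
have := iter_porbit x k; have := uniq_traject_porbit x k.
rewrite orb_k card3 => uniq_k iter_k; split => // j /(implyP (moved_orb j)).
by rewrite -orb_k porbit_traject orb_k card3.
Qed.

Lemma kcycle3_moved x : is_kcycle 3 x -> exists k, x k != k.
Proof.
case/existsP => i /andP [_ /eqP card3]; exists i.
have := uniq_traject_porbit x i.
by rewrite card3 /= !inE eq_sym => /and3P [/norP []].
Qed.

Lemma comp_kcycle3_kcycle5 x y g m : comp_eq x y g ->
    is_kcycle 3 x -> is_kcycle 3 y -> x m != m -> y m != m ->
    y (x m) = x m -> y (x (x m)) = x (x m) ->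
  is_kcycle 5 g.
Proof.
move=> /forallP gE x3 y3 xm ym yx1 yx2.
have {}gE j : g j = x (y j) by rewrite (eqP (gE j)).
have [x3m /uniq3P [mx1 mx2 x12] moved_x] := kcycle3P x3 xm.
have [y3m /uniq3P [my1 my2 y12] moved_y] := kcycle3P y3 ym.
have y1m : y (y m) != y m by rewrite eq_sym.
have y2m : y (y (y m)) != y (y m) by rewrite y3m.
have [y1x1 y1x2] := (moved_neq_fixed y1m yx1, moved_neq_fixed y1m yx2).
have [y2x1 y2x2] := (moved_neq_fixed y2m yx1, moved_neq_fixed y2m yx2).
have xy1 : x (y m) = y m.
  apply/eqP; apply: contraNT y1x1 => /moved_x.
  by rewrite !inE eq_sym (negbTE my1) (negbTE y1x2) orbF.
have xy2 : x (y (y m)) = y (y m).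
  apply/eqP; apply: contraNT y2x1 => /moved_x.
  by rewrite !inE eq_sym (negbTE my2) (negbTE y2x2) orbF.
have orbitE : traject g m 5 = [:: m; y m; y (y m); x m; x (x m)].
  by rewrite /= !gE xy1 xy2 y3m yx1.
apply: (@is_kcycle_traject 5 g m) => //.
- by rewrite /= !gE xy1 xy2 y3m yx1 yx2 x3m.
- rewrite orbitE /= !inE !negb_or my1 my2 y12 mx1 mx2 x12.
  by rewrite y1x1 y1x2 y2x1 y2x2.
- move=> j; rewrite orbitE gE !inE; have [yj | /negPn/eqP ->] := boolP (y j != j).
  + by have := moved_y j yj; rewrite !inE => /or3P [] ->; rewrite ?orbT.
  + by move/moved_x; rewrite !inE => /or3P [] ->; rewrite ?orbT.
Qed.

End Cycles.

Section TriForm.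
Variables (R : realType) (n : nat).
Local Notation C := R[i].
Local Notation V := 'rV[C]_n.
Implicit Types (g x : 'S_n) (k : 'I_n) (v w : V).

Lemma vcoordD v w j : vcoord (v + w) j = vcoord v j + vcoord w j.
Proof. by rewrite /vcoord mxE. Qed.

Lemma vcoord_pact (s : 'S_n) v j : vcoord (pact s v) j = vcoord v ((s^-1)%g j).
Proof. by rewrite /vcoord mxE. Qed.

Lemma vcoord_tri_vec (a b : C) g j :
  vcoord (tri_vec a b g) j = if g j != j then a else b.
Proof. by rewrite /vcoord mxE inE. Qed.

Definition tri_form g v w : C := kappaC 1 g v w.

Lemma kappaC_tri_form c g v w : kappaC c g v w = tri_form g v w * c.
Proof.
rewrite /tri_form /kappaC mulr_suml; apply: eq_bigr => p _.
rewrite mulr_suml; apply: eq_bigr => q _.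
by rewrite /kappaC_basis; case: ifP; rewrite ?mulr0 ?mul0r // mulr1 mulrA.
Qed.

Lemma kappaL_tri_form a b g v w :
  kappaL a b g v w = tri_form g v w *: tri_vec a b g.
Proof.
rewrite /tri_form /kappaC /kappaL scaler_suml; apply: eq_bigr => p _.
rewrite scaler_suml; apply: eq_bigr => q _.
by rewrite /kappaL_basis /kappaC_basis; case: ifP;
  rewrite ?scaler0 ?mulr0 ?scale0r // mulr1 scalerA.
Qed.

Lemma tri_form_non3 g v w : ~~ is_kcycle 3 g -> tri_form g v w = 0.
Proof.
move=> not3; rewrite /tri_form /kappaC big1 // => p _; rewrite big1 // => q _.
by rewrite /kappaC_basis /tri_pair (negbTE not3) mulr0.
Qed.

Lemma tri_formZr g v w s : tri_form g v (s *: w) = s * tri_form g v w.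
Proof.
rewrite /tri_form /kappaC mulr_sumr; apply: eq_bigr => p _; rewrite mulr_sumr.
by apply: eq_bigr => q _; rewrite /vcoord mxE; ring.
Qed.

Lemma tri_form_cycle3 x k k1 k2 v w : is_kcycle 3 x -> x k != k ->
    x k = k1 -> x k1 = k2 ->
  tri_form x v w = vcoord v k * (vcoord w k1 - vcoord w k2)
                 + vcoord v k1 * (vcoord w k2 - vcoord w k)
                 + vcoord v k2 * (vcoord w k - vcoord w k1).
Proof.
move=> x3 xk <- <-; have [x3k uniq_orb moved_orb] := kcycle3P x3 xk.
have off_orb p q : p \notin [:: k; x k; x (x k)] ->
    kappaC_basis (1 : C) x p q = 0 /\ kappaC_basis (1 : C) x q p = 0.
  move=> p_out; have xp : x p = p.
    by apply/eqP; apply: contraNT p_out => /moved_orb.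
  by rewrite /kappaC_basis /tri_pair /moved !inE xp eqxx !andbF.
rewrite /tri_form /kappaC (sum_over_support uniq_orb); last first.
  by move=> p /off_orb p_out; rewrite big1 // => q _; rewrite (p_out q).1 mulr0.
rewrite !big_cons big_nil !(sum_over_support uniq_orb); try
  by move=> q /off_orb q_out; rewrite (q_out _).2 mulr0.
have /uniq3P [kx1 kx2 x12] := uniq_orb.
rewrite !big_cons !big_nil /kappaC_basis /tri_pair /tri_sign /moved !inE x3k.
rewrite !eqxx x3 !(eq_sym (x k)) !(eq_sym (x (x k))).
by rewrite (negbTE kx1) (negbTE kx2) (negbTE x12) /=; ring.
Qed.

Lemma tri_form_const x k u w : is_kcycle 3 x -> x k != k ->
    vcoord w (x k) = vcoord w k -> vcoord w (x (x k)) = vcoord w k ->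
  tri_form x u w = 0.
Proof.
move=> x3 xk w1 w2.
by rewrite (tri_form_cycle3 _ _ x3 xk erefl erefl) w1 w2; ring.
Qed.

End TriForm.

Section PhiScalar.
Variables (R : realType) (n : nat) (a b : R[i]).
Local Notation C := R[i].
Local Notation V := 'rV[C]_n.
Variables (v1 v2 v3 : V).
Implicit Types (x y : 'S_n).

Definition phi_scalar x y : C :=
  tri_form y v2 v3 * tri_form x (v1 + pact y v1) (tri_vec a b y)
  + tri_form y v3 v1 * tri_form x (v2 + pact y v2) (tri_vec a b y)
  + tri_form y v1 v2 * tri_form x (v3 + pact y v3) (tri_vec a b y).

Lemma phi_xy_kappaL x y :
  phi_xy (kappaL a b) (kappaL a b) x y v1 v2 v3
  = phi_scalar x y *: tri_vec a b x.
Proof. by rewrite /phi_xy !kappaL_tri_form !tri_formZr -!scalerDl. Qed.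

Lemma phi_xy_kappaC c x y :
  phi_xy (kappaC c) (kappaL a b) x y v1 v2 v3 = phi_scalar x y * c.
Proof.
by rewrite /phi_xy !kappaC_tri_form !kappaL_tri_form !tri_formZr -!mulrDl.
Qed.

Lemma phi_scalar_shared_two x y k : is_kcycle 3 x -> is_kcycle 3 y ->
    x k != k -> y k = k -> y (x k) != x k -> y (x (x k)) != x (x k) ->
  phi_scalar x y = 0.
Proof.
move=> x3 y3 xk yk y1 y2; have [_ /uniq3P [_ _ x12] _] := kcycle3P x3 xk.
have [y3x _ moved_y] := kcycle3P y3 y1.
have yV z m : y z = m -> (y^-1)%g m = z by move=> <-; rewrite permK.
rewrite /phi_scalar !(tri_form_cycle3 _ _ x3 xk erefl erefl).
rewrite !vcoordD !vcoord_tri_vec yk eqxx y1 y2 /= !vcoord_pact (yV _ _ yk).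
have := moved_y _ y2; rewrite !inE eq_sym (negbTE x12) /=.
case/orP => /eqP y_x12.
- have y_x21 : y (y (x (x k))) = x k by rewrite y_x12.
  rewrite !(tri_form_cycle3 _ _ y3 y1 (esym y_x12) erefl).
  by rewrite (yV _ _ (esym y_x12)) (yV _ _ y_x21); ring.
- have y_x21 : y (x (x k)) = x k by rewrite y_x12.
  rewrite !(tri_form_cycle3 _ _ y3 y1 erefl (esym y_x12)).
  by rewrite (yV _ _ (esym y_x12)) (yV _ _ y_x21); ring.
Qed.

Lemma phi_scalar_eq0 x y g :
  comp_eq x y g -> ~~ is_kcycle 5 g -> phi_scalar x y = 0.
Proof.
move=> xy_g not5.
have [x3 | /tri_form_non3 Bx0] := boolP (is_kcycle 3 x); last first.
  by rewrite /phi_scalar !Bx0 !mulr0 !addr0.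
have [y3 | /tri_form_non3 By0] := boolP (is_kcycle 3 y); last first.
  by rewrite /phi_scalar !By0 !mul0r !addr0.
have [k xk] := kcycle3_moved x3; have [x3k _ _] := kcycle3P x3 xk.
case: (odd_one_out [pred j | y j != j] x3k) => /= [[y1 y2] | [j j_orb]].
  rewrite /phi_scalar !(tri_form_const _ x3 xk) ?vcoord_tri_vec ?y1 ?y2 //.
  by rewrite !mulr0 !addr0.
have xj : x j != j.
  by move: j_orb; rewrite !inE => /or3P [] /eqP ->; rewrite ?(inj_eq perm_inj).
case: (boolP (y j != j)) => [yj | /negPn/eqP yj] /= [yj1 yj2].
- case/negP: not5; apply: (comp_kcycle3_kcycle5 xy_g x3 y3 xj yj).
    exact/eqP/negbFE.
  exact/eqP/negbFE.
- exact: (phi_scalar_shared_two x3 y3 xj yj yj1 yj2).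
Qed.

End PhiScalar.

Theorem proposition7p2 (R : realType) (n : nat) (hn : (3 <= n)%N)
    (a b c : R[i]) (g : 'S_n) :
  ~~ is_kcycle 5 g ->
  (forall v1 v2 v3 : 'rV[R[i]]_n,
     phi_g (@kappaL R n a b) (@kappaL R n a b) g v1 v2 v3 = 0) /\
  (forall v1 v2 v3 : 'rV[R[i]]_n,
     phi_g (@kappaC R n c) (@kappaL R n a b) g v1 v2 v3 = 0).
Proof.
move=> not5; split=> v1 v2 v3;
  rewrite /phi_g big1 // => x _; rewrite big1 // => y xy_g.
- by rewrite phi_xy_kappaL (phi_scalar_eq0 _ _ _ _ _ xy_g not5) scale0r.
- by rewrite phi_xy_kappaC (phi_scalar_eq0 _ _ _ _ _ xy_g not5) mul0r.
Qed.
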